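(* Let $\mathcal V$ be a finite set, $2\le k\le|\mathcal V|-2$, let $\Gamma\subset\binom{\mathcal V}{k}$ be a code such that $G:={\rm Aut}(\Gamma)\cap{\rm Sym}(\mathcal V)$ is transitive on $\mathcal V$. Then for $u\in\mathcal V$ the set $\Delta(u)=\bigcap\{\gamma'\in\Gamma : u\in\gamma'\}$ is a block of imprimitivity for $G$ in $\mathcal V$. In particular, if $G$ is primitive on $\mathcal V$, then $\Delta(u)=\{u\}$.
   Context: A code is a proper non-empty subset $\Gamma$ of $\binom{\mathcal V}{k}$, the set of $k$-subsets of $\mathcal V$ (vertex set of the Johnson graph $J(|\mathcal V|,k)$, adjacency meaning intersection of size $k-1$). ${\rm Aut}(\Gamma)$ is the setwise stabiliser of $\Gamma$ in the automorphism group of the Johnson graph. *)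

From mathcomp Require Import all_boot all_fingroup.
Set Implicit Arguments. Unset Strict Implicit. Unset Printing Implicit Defensive.

Definition ksubsets (V : finType) (k : nat) : {set {set V}} :=
  [set A : {set V} | #|A| == k].

Definition is_code (V : finType) (k : nat) (Gamma : {set {set V}}) : Prop :=
  Gamma != set0 /\ Gamma \proper ksubsets V k.

(* Aut(Gamma) ∩ Sym(V): permutations of V whose induced action on
   k-subsets stabilises Gamma setwise. *)
Definition AutSym (V : finType) (Gamma : {set {set V}}) : {set {perm V}} :=
  [set g : {perm V} | [set (g @: A) | A : {set V} in Gamma] == Gamma].

Definition transitive_on (V : finType) (G : {set {perm V}}) : Prop :=
  forall x y : V, exists2 g, g \in G & g x = y.

Definition is_block (V : finType) (G : {set {perm V}}) (B : {set V}) : Prop :=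
  forall g, g \in G -> g @: B = B \/ [disjoint g @: B & B].

Definition primitive_on (V : finType) (G : {set {perm V}}) : Prop :=
  transitive_on G /\
  forall B : {set V}, is_block G B -> B != set0 -> #|B| = 1 \/ B = setT.

Definition Delta (V : finType) (Gamma : {set {set V}}) (u : V) : {set V} :=
  \bigcap_(c in Gamma | u \in c) c.

From mathcomp Require Import all_boot all_fingroup zify.
Set Implicit Arguments. Unset Strict Implicit.

(* Every g in Aut(Gamma) maps the codewords through u onto the codewords
   through g u, hence g (Delta u) = Delta (g u).  Under transitivity all the
   Delta v have the same size, and w in Delta u forces Delta w <= Delta u,
   hence Delta w = Delta u: the sets Delta v partition V, so each is a block.
   Delta u = V is impossible, since a codeword through u has only k < |V|
   points; so for a primitive group the block Delta u is the singleton. *)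

Section Delta.
Variables (V : finType) (Gamma : {set {set V}}).

Lemma AutSym_imset g c : g \in AutSym Gamma -> c \in Gamma -> g @: c \in Gamma.
Proof. by rewrite inE => /eqP defGamma Gc; rewrite -defGamma imset_f. Qed.

Lemma AutSym_preimset g c : g \in AutSym Gamma -> c \in Gamma ->
  exists2 c', c' \in Gamma & c = g @: c'.
Proof. by rewrite inE => /eqP defGamma; rewrite -{1}defGamma => /imsetP. Qed.

Lemma DeltaP u x :
  reflect (forall c, c \in Gamma -> u \in c -> x \in c) (x \in Delta Gamma u).
Proof.
apply: (iffP bigcapP) => [inc c Gc uc | inc c /andP[]]; last exact: inc.
by apply: inc; rewrite Gc uc.
Qed.

Lemma Delta_id u : u \in Delta Gamma u.
Proof. by apply/DeltaP. Qed.

Lemma Delta_imset g u :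
  g \in AutSym Gamma -> g @: Delta Gamma u = Delta Gamma (g u).
Proof.
move=> autg; apply/setP => x; rewrite -(permKV g x) mem_imset; last exact: perm_inj.
apply/DeltaP/DeltaP => [yDu c Gc | gyDgu c Gc uc].
  have [c' Gc' ->] := AutSym_preimset autg Gc.
  by rewrite !mem_imset; [exact: yDu | exact: perm_inj..].
by rewrite -(mem_imset _ _ (@perm_inj _ g)) gyDgu ?AutSym_imset ?imset_f.
Qed.

Lemma Delta_subset u w : w \in Delta Gamma u -> Delta Gamma w \subset Delta Gamma u.
Proof.
move/DeltaP=> wDu; apply/subsetP => x /DeltaP xDw.
by apply/DeltaP => c Gc uc; apply/xDw/wDu.
Qed.

Hypothesis transG : transitive_on (AutSym Gamma).

Lemma card_Delta u v : #|Delta Gamma v| = #|Delta Gamma u|.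
Proof.
have [g autg <-] := transG u v.
by rewrite -Delta_imset // card_imset //; exact: perm_inj.
Qed.

Lemma Delta_eq u w : w \in Delta Gamma u -> Delta Gamma w = Delta Gamma u.
Proof.
by move=> wDu; apply/eqP; rewrite eqEcard Delta_subset // (card_Delta w u) leqnn.
Qed.

Lemma Delta_block u : is_block (AutSym Gamma) (Delta Gamma u).
Proof.
move=> g autg; rewrite Delta_imset //.
have [disj | /pred0Pn[w /andP[wDgu wDu]]] :=
  boolP [disjoint Delta Gamma (g u) & Delta Gamma u]; first by right.
by left; rewrite -(Delta_eq wDgu) (Delta_eq wDu).
Qed.

Lemma Delta_neq_setT k u :
  0 < k < #|V| -> Gamma != set0 -> Gamma \subset ksubsets V k ->
  Delta Gamma u != setT.
Proof.
move=> /andP[k_gt0 k_ltV] /set0Pn[c Gc] /subsetP/(_ c Gc); rewrite inE => /eqP ck.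
have /set0Pn[v vc] : c != set0 by rewrite -card_gt0 ck.
apply/negP => /eqP DuT.
have DvT : Delta Gamma v = setT.
  by apply/eqP; rewrite eqEcard subsetT cardsT (card_Delta u) DuT cardsT /=.
have /subset_leq_card : setT \subset c.
  by apply/subsetP => x _; move: (in_setT x); rewrite -DvT => /DeltaP; apply.
by rewrite cardsT ck leqNgt k_ltV.
Qed.

End Delta.

Theorem lemma5p1 (V : finType) (k : nat) (Gamma : {set {set V}}) :
  2 <= k -> k <= #|V| - 2 ->
  is_code k Gamma ->
  transitive_on (AutSym Gamma) ->
  forall u : V,
    is_block (AutSym Gamma) (Delta Gamma u) /\
    (primitive_on (AutSym Gamma) -> Delta Gamma u = [set u]).
Proof.
move=> k_ge2 k_le [Gamma_n0 /proper_sub Gamma_sub] transG u.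
split=> [|[_ primG]]; first exact: Delta_block.
have Du_n0 : Delta Gamma u != set0 by apply/set0Pn; exists u; exact: Delta_id.
have k_range : 0 < k < #|V| by apply/andP; split; lia.
have [/eqP/cards1P[x Du1] | DuT] := primG _ (Delta_block transG u) Du_n0.
  by move: (Delta_id Gamma u); rewrite Du1 inE => /eqP <-.
by move/eqP: (Delta_neq_setT transG u k_range Gamma_n0 Gamma_sub); rewrite DuT.
Qed.
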